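(* For $K\in\mathbb{N}$ let $f^{s,K}_{square}(t)=\frac{2s}{K}\sum_{k=1}^K([t-\tfrac{sk}{K}]_++[-t-\tfrac{sk}{K}]_+)$ and define $$f^K_{inner}(\mathbf{x})=\sum_{i=1}^d f^{\sqrt2,K}_{square}\Big(\tfrac{1}{\sqrt2}\begin{bmatrix}\mathbf{e}_i\\ \mathbf{e}_i\end{bmatrix}^\top\mathbf{x}\Big)-1,\qquad \mathbf{x}\in\mathbb{R}^{2d},$$ where $\mathbf{e}_i$ is the $i$-th standard basis vector of $\mathbb{R}^d$. Then $\sup_{\mathbf{x}\in\mathcal{X}_d}|f^K_{inner}(\mathbf{x})-\langle\mathbf{x}^{(1)},\mathbf{x}^{(2)}\rangle|\le2d(\frac1K+\frac1{K^2})$. Further, there is an absolute constant $C$ such that for every $\beta>0$, $\beta^{-1}f^K_{inner}\in\mathcal{N}_{2,2Kd}$ and $R_2(\beta^{-1}f^K_{inner};2Kd)\le C(d\beta^{-1}+\beta^{-2})$.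
   Context: $\mathcal{X}_d=\mathbb{S}^{d-1}\times\mathbb{S}^{d-1}\subset\mathbb{R}^{2d}$, $d\ge2$; $\mathbf{x}^{(1)},\mathbf{x}^{(2)}$ are the first and last $d$ coordinates of $\mathbf{x}$. $\mathcal{N}_{2,\omega}$ is the set of depth-two ReLU networks $f_\phi(\mathbf{x})=\sum_{k=1}^{\omega_1}a_k[\mathbf{w}_k^\top\mathbf{x}+b_k]_++c$ with $\omega_1\le\omega$; $R_2(f;\omega)=\inf\{\|\phi\|^2/2: f_\phi=f\text{ on }\mathcal{X}_d,\ \omega_1\le\omega\}$, where $\|\phi\|^2$ is the sum of squares of all weights and biases. *)

From HB Require Import structures.
From mathcomp Require Import all_boot all_order all_algebra.
From mathcomp Require Import all_classical all_reals ereal.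
Set Implicit Arguments. Unset Strict Implicit. Unset Printing Implicit Defensive.
Import Order.TTheory GRing.Theory Num.Theory.
Local Open Scope ring_scope.

Section Defs.
Variable R : realType.

Definition relu (t : R) : R := Num.max t 0.

Definition fsquare (s : R) (K : nat) (t : R) : R :=
  (2 * s / K%:R) *
  \sum_(k < K) (relu (t - s * (k.+1)%:R / K%:R) + relu (- t - s * (k.+1)%:R / K%:R)).

(* points of R^{2d} are functions 'I_(d + d) -> R; x^(1) = first d coords,
   x^(2) = last d coords *)
Definition x1 (d : nat) (x : 'I_(d + d) -> R) (i : 'I_d) : R := x (lshift d i).
Definition x2 (d : nat) (x : 'I_(d + d) -> R) (i : 'I_d) : R := x (rshift d i).

Definition in_Xd (d : nat) (x : 'I_(d + d) -> R) : Prop :=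
  \sum_(i < d) x1 x i ^+ 2 = 1 /\ \sum_(i < d) x2 x i ^+ 2 = 1.

Definition inner12 (d : nat) (x : 'I_(d + d) -> R) : R :=
  \sum_(i < d) x1 x i * x2 x i.

Definition finner (d K : nat) (x : 'I_(d + d) -> R) : R :=
  \sum_(i < d) fsquare (Num.sqrt 2) K ((x1 x i + x2 x i) / Num.sqrt 2) - 1.

Definition net (d n : nat) (a : 'I_n -> R) (W : 'I_n -> 'I_(d + d) -> R)
  (b : 'I_n -> R) (c : R) (x : 'I_(d + d) -> R) : R :=
  \sum_(k < n) a k * relu (\sum_(j < d + d) W k j * x j + b k) + c.

Definition sqnorm (d n : nat) (a : 'I_n -> R) (W : 'I_n -> 'I_(d + d) -> R)
  (b : 'I_n -> R) (c : R) : R :=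
  \sum_(k < n) a k ^+ 2 + \sum_(k < n) \sum_(j < d + d) W k j ^+ 2
  + \sum_(k < n) b k ^+ 2 + c ^+ 2.

Definition inN2 (d omega : nat) (f : ('I_(d + d) -> R) -> R) : Prop :=
  exists (n : nat) (a : 'I_n -> R) (W : 'I_n -> 'I_(d + d) -> R)
         (b : 'I_n -> R) (c : R),
    (n <= omega)%N /\ forall x, in_Xd x -> net a W b c x = f x.

(* R_2(f; omega) = inf { ||phi||^2/2 : f_phi = f on X_d, width <= omega }
   (extended-real infimum; +oo if no such network) *)
Definition R2 (d omega : nat) (f : ('I_(d + d) -> R) -> R) : \bar R :=
  ereal_inf [set e : \bar R | exists (n : nat) (a : 'I_n -> R)
         (W : 'I_n -> 'I_(d + d) -> R) (b : 'I_n -> R) (c : R),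
         [/\ (n <= omega)%N, (forall x, in_Xd x -> net a W b c x = f x) &
             e = (sqnorm a W b c / 2)%:E]].
End Defs.

From HB Require Import structures.
From mathcomp Require Import all_boot all_order all_algebra.
From mathcomp Require Import all_classical all_reals ereal.
From mathcomp Require Import ring lra zify.
Set Implicit Arguments. Unset Strict Implicit. Unset Printing Implicit Defensive.
Import Order.TTheory GRing.Theory Num.Theory.
Local Open Scope ring_scope.

(* [fsquare s K] interpolates [t^2] from below on [-s, s] with step [h = s/K]:
   [relu u ^+ 2 - relu (u - h) ^+ 2 - 2 h relu (u - h)] lies in [[0, h^2]], so
   peeling off the [K] ramps one at a time bounds the error by [K h^2 = s^2/K].
   With [t_i = (x1_i + x2_i) / sqrt 2] one has [|t_i| <= sqrt 2] on X_d and
   [sum_i t_i^2 = 1 + <x1, x2>], whence the uniform bound [2d/K].  The network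
   has one hidden unit per coordinate, knot and sign; balancing its output
   weight against its input weights and bias at a common size [mu], with
   [mu^2 = 2 sqrt 2 / (K beta)], makes the [2Kd] units cost [O(d/beta)] in
   squared norm, while the output bias [-1/beta] costs [1/beta^2]. *)

Section Relu.
Variable R : realType.
Implicit Types (h u : R) (K : nat).

Lemma relu_id u : 0 <= u -> relu u = u.
Proof. by move=> u_ge0; rewrite /relu max_l. Qed.

Lemma relu_eq0 u : u <= 0 -> relu u = 0.
Proof. by move=> u_le0; rewrite /relu max_r. Qed.

Lemma reluZ c u : 0 <= c -> relu (c * u) = c * relu u.
Proof. by move=> c_ge0; rewrite /relu maxr_pMr // mulr0. Qed.

Lemma sqr_relu_step h u : 0 <= h ->
  0 <= relu u ^+ 2 - relu (u - h) ^+ 2 - 2 * h * relu (u - h) <= h ^+ 2.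
Proof.
move=> h_ge0; have [hu|uh] := lerP h u.
  by rewrite !relu_id; [apply/andP; split; nra | lra | lra].
rewrite [relu (u - h)]relu_eq0; last lra.
have [u_ge0|u_lt0] := lerP 0 u.
  by rewrite relu_id //; apply/andP; split; nra.
by rewrite relu_eq0; [apply/andP; split; nra | lra].
Qed.

Lemma sqr_relu_ramp h K u : 0 <= h -> u <= K%:R * h ->
  0 <= relu u ^+ 2 - 2 * h * \sum_(k < K) relu (u - k.+1%:R * h)
    <= K%:R * h ^+ 2.
Proof.
move=> h_ge0; elim: K u => [|K IH] u uKh.
  rewrite big_ord0 relu_eq0; last by rewrite mul0r in uKh.
  by rewrite expr0n mulr0 subrr mul0r lexx.
rewrite big_ord_recl /=.
have shift (k : 'I_K) : u - (bump 0 k).+1%:R * h = u - h - k.+1%:R * h.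
  by rewrite /bump leq0n add1n -natr1; ring.
under eq_bigr do rewrite shift.
rewrite mul1r; rewrite -natr1 in uKh *.
have := IH (u - h) ltac:(lra); have := sqr_relu_step u h_ge0.
lra.
Qed.

Lemma ramp_sum_eq0 h K u : 0 <= h -> u <= 0 ->
  \sum_(k < K) relu (u - k.+1%:R * h) = 0.
Proof.
move=> h_ge0 u_le0; apply: big1 => k _; apply: relu_eq0.
have : 0 <= k.+1%:R * h by rewrite mulr_ge0.
lra.
Qed.
End Relu.

Section Fsquare.
Variable R : realType.
Implicit Types (s t : R) (K : nat).

Lemma fsquare_ramp s K t : fsquare s K t =
  2 * (s / K%:R) * \sum_(k < K)
    (relu (t - k.+1%:R * (s / K%:R)) + relu (- t - k.+1%:R * (s / K%:R))).
Proof.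
rewrite /fsquare; congr (_ * _); first by rewrite mulrA.
by apply: eq_bigr => k _; rewrite [_ * k.+1%:R]mulrC -mulrA.
Qed.

Lemma fsquareN s K t : fsquare s K (- t) = fsquare s K t.
Proof.
by rewrite /fsquare opprK; congr (_ * _); apply: eq_bigr => k _; rewrite addrC.
Qed.

Lemma fsquare_err s K t : (0 < K)%N -> 0 <= s -> `|t| <= s ->
  0 <= t ^+ 2 - fsquare s K t <= s ^+ 2 / K%:R.
Proof.
move=> K_gt0 s_ge0; wlog t_ge0 : t / 0 <= t => [hwlog|].
  have [|t_lt0] := lerP 0 t; first exact: hwlog.
  by rewrite -sqrrN -fsquareN -normrN; apply: hwlog; lra.
rewrite ger0_norm // => t_le_s.
have K_pos : 0 < K%:R :> R by rewrite ltr0n.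
have h_ge0 : 0 <= s / K%:R by rewrite divr_ge0 // ltW.
have Kh : K%:R * (s / K%:R) = s by rewrite mulrC divfK // gt_eqF.
have Nt_le0 : - t <= 0 by lra.
rewrite fsquare_ramp big_split /= (ramp_sum_eq0 K h_ge0 Nt_le0) addr0.
have t_le_Kh : t <= K%:R * (s / K%:R) by rewrite Kh.
have -> : s ^+ 2 / K%:R = K%:R * (s / K%:R) ^+ 2 by field; rewrite gt_eqF.
by have := sqr_relu_ramp h_ge0 t_le_Kh; rewrite relu_id.
Qed.
End Fsquare.

Lemma sqr_le_sum_sqr (R : realType) (I : finType) (F : I -> R) (i : I) :
  F i ^+ 2 <= \sum_j F j ^+ 2.
Proof. by rewrite (bigD1 i) //= lerDl sumr_ge0 // => j _; exact: sqr_ge0. Qed.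

Lemma sqrt2_sqr (R : realType) : Num.sqrt (2 : R) ^+ 2 = 2.
Proof. by rewrite sqr_sqrtr. Qed.

Lemma sqrt2_le (R : realType) : Num.sqrt (2 : R) <= 3 / 2.
Proof. by have := sqrt2_sqr R; have := sqrtr_ge0 (2 : R); nra. Qed.

Lemma finner_inner12_err (R : realType) (d K : nat) (x : 'I_(d + d) -> R) :
  (0 < K)%N -> in_Xd x -> `|finner K x - inner12 x| <= 2 * d%:R / K%:R.
Proof.
move=> K_gt0 [x1_unit x2_unit].
set s := Num.sqrt (2 : R); have s2 := sqrt2_sqr R; rewrite -/s in s2.
have s_gt0 : 0 < s by rewrite sqrtr_gt0.
pose t i := (x1 x i + x2 x i) / s.
have sum_t2 : \sum_i t i ^+ 2 = 1 + inner12 x.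
  transitivity
    ((\sum_i x1 x i ^+ 2) / 2 + inner12 x + (\sum_i x2 x i ^+ 2) / 2).
    rewrite /inner12 !mulr_suml -!big_split /=; apply: eq_bigr => i _.
    by rewrite /t expr_div_n s2; field.
  by rewrite x1_unit x2_unit; field.
have t_le_s i : `|t i| <= s.
  rewrite -sqrtr_sqr ler_wsqrtr // /t expr_div_n s2 ler_pdivrMr //.
  have := sqr_le_sum_sqr (x1 x) i; have := sqr_le_sum_sqr (x2 x) i.
  rewrite x1_unit x2_unit; have := sqr_ge0 (x1 x i - x2 x i); nra.
have err i := fsquare_err K_gt0 (ltW s_gt0) (t_le_s i).
have -> : finner K x - inner12 x = - \sum_i (t i ^+ 2 - fsquare s K (t i)).
  by rewrite /finner sumrB sum_t2; ring.
rewrite normrN ger0_norm; last by apply: sumr_ge0 => i _; case/andP: (err i).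
apply: le_trans (ler_sum _ (fun i _ => proj2 (andP (err i)))) _.
by rewrite sumr_const card_ord s2 -[_ *+ d]mulr_natr mulrAC.
Qed.

Lemma big_pair (T : Type) (idx : T) (op : Monoid.com_law idx) (I J : finType)
    (F : I * J -> T) :
  \big[op/idx]_p F p = \big[op/idx]_i \big[op/idx]_j F (i, j).
Proof. by rewrite pair_bigA; apply: eq_bigr => -[]. Qed.

Section FiniteNetwork.
Variables (R : realType) (d : nat) (I : finType).
Variables (a : I -> R) (W : I -> 'I_(d + d) -> R) (b : I -> R) (c : R).

Definition fnet (x : 'I_(d + d) -> R) : R :=
  \sum_k a k * relu (\sum_j W k j * x j + b k) + c.

Definition fsqnorm : R :=
  \sum_k a k ^+ 2 + \sum_k \sum_j W k j ^+ 2 + \sum_k b k ^+ 2 + c ^+ 2.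

Local Notation ev := (enum_val (A := {: I})).

Lemma sum_enum_val (F : I -> R) : \sum_(i < #|{: I}|) F (ev i) = \sum_k F k.
Proof. by rewrite -(big_enum_val (A := {: I})). Qed.

Lemma net_enum_val x : net (a \o ev) (W \o ev) (b \o ev) c x = fnet x.
Proof. by rewrite /fnet -sum_enum_val. Qed.

Lemma sqnorm_enum_val : sqnorm (a \o ev) (W \o ev) (b \o ev) c = fsqnorm.
Proof. by rewrite /fsqnorm -!sum_enum_val. Qed.

Lemma fnet_realizes (omega : nat) (f : ('I_(d + d) -> R) -> R) :
  (#|{: I}| <= omega)%N -> (forall x, in_Xd x -> fnet x = f x) ->
  inN2 omega f /\ (R2 omega f <= (fsqnorm / 2)%:E)%E.
Proof.
move=> width fE; split.
  by exists #|{: I}|, (a \o ev), (W \o ev), (b \o ev), c; split=> // x /fE <-;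
    exact: net_enum_val.
apply: ereal_inf_lbound; exists #|{: I}|, (a \o ev), (W \o ev), (b \o ev), c.
by split=> [//|x /fE <-|]; rewrite ?net_enum_val ?sqnorm_enum_val.
Qed.
End FiniteNetwork.

Section PairBasis.
Variables (R : realType) (d : nat).

Definition pair_basis (i : 'I_d) (j : 'I_(d + d)) : R :=
  ((j == lshift d i) || (j == rshift d i))%:R.

Lemma sum_pair_basisM (i : 'I_d) (F : 'I_(d + d) -> R) :
  \sum_j pair_basis i j * F j = F (lshift d i) + F (rshift d i).
Proof.
rewrite big_split_ord /= /pair_basis.
under eq_bigr do rewrite !eq_shift orbF mulr_natl mulrb.
under [X in _ + X]eq_bigr do rewrite !eq_shift /= mulr_natl mulrb.
by rewrite -!big_mkcond !big_pred1_eq.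
Qed.

Lemma pair_basis_sqr (i : 'I_d) (j : 'I_(d + d)) :
  pair_basis i j ^+ 2 = pair_basis i j.
Proof. by rewrite /pair_basis; case: (_ || _); rewrite ?expr0n ?expr1n. Qed.
End PairBasis.
Arguments pair_basis {R d}.

Section FinnerNetwork.
Variables (R : realType) (d K : nat) (beta : R).
Hypotheses (K_gt0 : (0 < K)%N) (beta_gt0 : 0 < beta).

Let s : R := Num.sqrt 2.
Let h : R := s / K%:R.
Let mu : R := Num.sqrt (2 * h / beta).

(* Unit [(i, (k, sg))] computes [mu * relu ((-1)^sg t_i - (k+1) h)] and has
   output weight [mu], so it contributes the [k]-th ramp of [fsquare] at
   [(-1)^sg t_i], with coefficient [mu^2 = 2h/beta]. *)
Definition finner_unit := ('I_d * ('I_K * bool))%type.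

Definition finner_a (p : finner_unit) : R := mu.
Definition finner_W (p : finner_unit) (j : 'I_(d + d)) : R :=
  (-1) ^+ p.2.2 * (mu / s) * pair_basis p.1 j.
Definition finner_b (p : finner_unit) : R := - (mu * (p.2.1.+1%:R * h)).
Definition finner_c : R := - beta^-1.

Lemma card_finner_unit : #|{: finner_unit}| = (2 * K * d)%N.
Proof. rewrite !card_prod !card_ord card_bool; lia. Qed.

Let s_gt0 : 0 < s. Proof. by rewrite sqrtr_gt0. Qed.
Let h_gt0 : 0 < h. Proof. by rewrite divr_gt0 // ltr0n. Qed.
Let mu_sqr : mu ^+ 2 = 2 * h / beta.
Proof. by rewrite sqr_sqrtr // ltW // divr_gt0 // mulr_gt0. Qed.

Lemma finner_fnet (x : 'I_(d + d) -> R) :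
  fnet finner_a finner_W finner_b finner_c x = beta^-1 * finner K x.
Proof.
pose t i := (x1 x i + x2 x i) / s.
have unitE p : finner_a p * relu (\sum_j finner_W p j * x j + finner_b p)
    = 2 * h / beta * relu ((-1) ^+ p.2.2 * t p.1 - p.2.1.+1%:R * h).
  have -> : \sum_j finner_W p j * x j + finner_b p
      = mu * ((-1) ^+ p.2.2 * t p.1 - p.2.1.+1%:R * h).
    under eq_bigr do rewrite /finner_W mulrAC mulrC.
    by rewrite sum_pair_basisM /finner_b /t /x1 /x2; ring.
  by rewrite reluZ ?sqrtr_ge0 // mulrA -expr2 mu_sqr.
rewrite /fnet; under eq_bigr do rewrite unitE.
rewrite /finner /finner_c mulrBr mulr1 mulr_sumr big_pair /=; congr (_ - _).
apply: eq_bigr => i _.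
rewrite big_pair /= fsquare_ramp -/s -/h [RHS]mulrA [RHS]mulr_sumr.
by apply: eq_bigr => k _; rewrite big_bool /= expr1 expr0 mulN1r mul1r; ring.
Qed.

Let sqr_finner_W_sum p : \sum_j finner_W p j ^+ 2 = mu ^+ 2.
Proof.
under eq_bigr do rewrite /finner_W exprMn pair_basis_sqr -[pair_basis _ _]mulr1.
rewrite -mulr_sumr sum_pair_basisM exprMn sqrr_sign mul1r expr_div_n sqrt2_sqr.
by field.
Qed.

Let sqr_finner_b_le p : finner_b p ^+ 2 <= 2 * mu ^+ 2.
Proof.
have Kh : K%:R * h = s by rewrite /h mulrC divfK // pnatr_eq0 -lt0n.
have kh_le_s : p.2.1.+1%:R * h <= s.
  by rewrite -Kh ler_wpM2r ?(ltW h_gt0) // ler_nat.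
have := sqrt2_sqr R; rewrite -/s => s2.
have kh_ge0 : 0 <= p.2.1.+1%:R * h by rewrite mulr_ge0 ?(ltW h_gt0).
by rewrite /finner_b sqrrN exprMn mulrC ler_wpM2r ?sqr_ge0 //; nra.
Qed.

Lemma finner_fsqnorm_le :
  fsqnorm finner_a finner_W finner_b finner_c / 2
  <= 12 * (d%:R / beta + 1 / beta ^+ 2).
Proof.
set n : R := (2 * K * d)%N%:R.
have sum_const (c : R) : \sum_(p : finner_unit) c = n * c.
  by rewrite sumr_const card_finner_unit mulr_natl.
have n_mu : n * mu ^+ 2 = 4 * s * (d%:R / beta).
  by rewrite mu_sqr /n /h !natrM; field; rewrite pnatr_eq0 -lt0n K_gt0 gt_eqF.
have bias_le : \sum_p finner_b p ^+ 2 <= n * (2 * mu ^+ 2).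
  by rewrite -sum_const; apply: ler_sum => p _; exact: sqr_finner_b_le.
rewrite /fsqnorm /finner_a (eq_bigr _ (fun p _ => sqr_finner_W_sum p)).
rewrite !sum_const.
rewrite /finner_c sqrrN exprVn -div1r.
have D_ge0 : 0 <= d%:R / beta by rewrite divr_ge0 // ltW.
have : s * (d%:R / beta) <= 3 / 2 * (d%:R / beta).
  by rewrite ler_wpM2r // sqrt2_le.
have : 0 <= 1 / beta ^+ 2 by rewrite divr_ge0 // exprn_ge0 // ltW.
move: bias_le; rewrite mulrCA n_mu; lra.
Qed.

Lemma scaled_finner_in_N2 :
  inN2 (2 * K * d) (fun x : 'I_(d + d) -> R => beta^-1 * finner K x) /\
  (R2 (2 * K * d) (fun x : 'I_(d + d) -> R => beta^-1 * finner K x)%R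
     <= (12 * (d%:R / beta + 1 / beta ^+ 2))%R%:E)%E.
Proof.
have width : (#|{: finner_unit}| <= 2 * K * d)%N by rewrite card_finner_unit.
have [inN R2_le] := fnet_realizes width (fun x _ => finner_fnet x).
by split=> //; apply: le_trans R2_le _; rewrite lee_fin finner_fsqnorm_le.
Qed.
End FinnerNetwork.

Theorem lemma13 (R : realType) :
  (forall (d K : nat), (2 <= d)%N -> (0 < K)%N ->
     forall x : 'I_(d + d) -> R, in_Xd x ->
       `|finner K x - inner12 x| <= 2 * d%:R * (1 / K%:R + 1 / (K%:R ^+ 2)))
  /\
  exists C : R, forall (d K : nat), (2 <= d)%N -> (0 < K)%N ->
    forall beta : R, 0 < beta ->
      inN2 (2 * K * d) (fun x : 'I_(d + d) -> R => beta^-1 * finner K x) /\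
      (R2 (2 * K * d) (fun x : 'I_(d + d) -> R => beta^-1 * finner K x)%R
         <= (C * (d%:R / beta + 1 / beta ^+ 2))%R%:E)%E.
Proof.
split=> [d K _ K_gt0 x x_Xd|].
  apply: le_trans (finner_inner12_err K_gt0 x_Xd) _.
  by rewrite mulrDr [X in X + _]mulrA mulr1 lerDl mulr_ge0 ?divr_ge0 ?exprn_ge0.
by exists 12 => d K _ K_gt0 beta beta_gt0; exact: scaled_finner_in_N2.
Qed.
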